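(* Let the data $S_0\supset\cdots\supset S_m$, $\delta$, $\kappa$, $T$ be as in the definition of a truncatable function $\psi$ below, let $(\epsilon_s)_{s\ge0}$ be a positive strictly decreasing sequence with $\epsilon_s\le\delta$ for all $s$, and let $c_0,\dots,c_m\in\mathbb{N}$ be counters. Consider the following truncation procedure applied to a point $\tilde x\in\mathbb{R}^n$: repeat { find the unique $i$ with $\tilde x\in S_i\setminus S_{i+1}$ (where $S_{m+1}=\emptyset$); if $\Gamma(\tilde x)<\epsilon_{c_i}$, set $\tilde x\leftarrow T(\tilde x,\epsilon_{c_i})$ and $c_i\leftarrow c_i+1$; otherwise stop }. Then this procedure terminates after at most $m$ applications of $T$.
   Context: $\psi=f+\varphi$ with $f:\mathbb{R}^n\to\mathbb{R}$ continuously differentiable and $\varphi:\mathbb{R}^n\to\mathbb{R}$ convex. For $x\in\mathbb{R}^n$ and $\|d\|=1$ let $\Gamma_{\max}(x,d)=\sup\{T>0: t\mapsto\psi(x+td)\text{ is continuously differentiable on }(0,T)\}$ and $\Gamma(x)=\inf_{\|d\|=1}\Gamma_{\max}(x,d)$. $\psi$ can be truncated if there exist sets $\mathbb{R}^n=S_0\supset S_1\supset\cdots\supset S_m$, $\delta\in(0,+\infty]$, $\kappa>0$, and $T:\mathbb{R}^n\times(0,\delta]\to\mathbb{R}^n$ such that (i) $\Gamma(x)\ge\delta$ for all $x\in S_m$; (ii) for any $a\in(0,\delta]$ and $x\in S_i\setminus S_{i+1}$, $i\in\{0,\dots,m-1\}$: if $\Gamma(x)\ge a$ then $T(x,a)=x$;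 otherwise $T(x,a)\in S_{i+1}$, $\Gamma(T(x,a))\ge a$ and $\|T(x,a)-x\|\le\kappa a$. *)

From HB Require Import structures.
From mathcomp Require Import all_boot all_order all_algebra.
From mathcomp Require Import all_classical all_reals all_analysis.
Set Implicit Arguments. Unset Strict Implicit. Unset Printing Implicit Defensive.
Import Order.TTheory GRing.Theory Num.Theory.
Import numFieldNormedType.Exports.
Local Open Scope classical_set_scope.
Local Open Scope ring_scope.

Section Defs.
Variables (R : realType) (n : nat).
Notation vec := 'rV[R]_n.

Definition enorm (x : vec) : R := Num.sqrt (\sum_(i < n) x 0 i ^+ 2).

(* f : R^n -> R continuously differentiable: differentiable everywhere and
   the derivative x |-> Df(x) is continuous (tested on each direction v,
   equivalent to operator-norm continuity in finite dimension). *)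
Definition C1_fun (f : vec -> R) : Prop :=
  (forall x, differentiable f x) /\ (forall v : vec, continuous (fun x => 'd f x v)).

Definition convex_fun (phi : vec -> R) : Prop :=
  forall (x y : vec) (t : R), 0 <= t <= 1 ->
    phi ((1 - t) *: x + t *: y) <= (1 - t) * phi x + t * phi y.

Definition C1_on_0T (g : R -> R) (T : R) : Prop :=
  (forall t, 0 < t < T -> derivable g t 1) /\
  {in `]0, T[, continuous (derive1 g)}.

Definition Gamma_max (psi : vec -> R) (x d : vec) : \bar R :=
  ereal_sup [set (T%:E)%E | T in [set T : R | 0 < T /\ C1_on_0T (fun t => psi (x + t *: d)) T]].

Definition Gamma (psi : vec -> R) (x : vec) : \bar R :=
  ereal_inf [set Gamma_max psi x d | d in [set d : vec | enorm d = 1]].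

Definition truncation_data (psi : vec -> R) (m : nat) (S : nat -> set vec)
    (delta : \bar R) (kappa : R) (T : vec -> R -> vec) : Prop :=
  [/\ S 0 = setT /\ (forall i, (i < m)%N -> S i.+1 `<=` S i),
      (0 < delta)%E,
      0 < kappa,
      (forall x, S m x -> (delta <= Gamma psi x)%E) &
      (forall (a : R) (x : vec) (i : nat), (i < m)%N -> 0 < a -> (a%:E <= delta)%E ->
         S i x -> ~ S i.+1 x ->
         ((a%:E <= Gamma psi x)%E -> T x a = x) /\
         ((Gamma psi x < a%:E)%E ->
           [/\ S i.+1 (T x a), (a%:E <= Gamma psi (T x a))%E &
                enorm (T x a - x) <= kappa * a]))].

Definition Sext (m : nat) (S : nat -> set vec) (i : nat) : set vec :=
  if (i <= m)%N then S i else set0.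

Definition trunc_step (psi : vec -> R) (m : nat) (S : nat -> set vec)
    (T : vec -> R -> vec) (eps : nat -> R)
    (st st' : vec * (nat -> nat)) : Prop :=
  exists i : nat, [/\ (i <= m)%N, Sext m S i st.1, ~ Sext m S i.+1 st.1,
     (Gamma psi st.1 < (eps (st.2 i))%:E)%E &
     st'.1 = T st.1 (eps (st.2 i)) /\
     st'.2 = (fun j => if j == i then (st.2 j).+1 else st.2 j)].

End Defs.

(* Each truncation step starts at the level i of the current point (x in S_i \ S_{i+1})
   and lands in S_{i+1}, so the level strictly increases along a run.  No step starts
   at level m, because Gamma >= delta >= eps there.  Hence after k steps the point lies
   in S_k, which is empty beyond m. *)
From HB Require Import structures.
From mathcomp Require Import all_boot all_order all_algebra.
From mathcomp Require Import all_classical all_reals all_analysis.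
Import Order.TTheory GRing.Theory Num.Theory.
Import numFieldNormedType.Exports.
Local Open Scope classical_set_scope.
Local Open Scope ring_scope.

Section Truncation.
Set Implicit Arguments.
Unset Strict Implicit.

Variables (R : realType) (n : nat) (psi : 'rV[R]_n -> R) (m : nat).
Variables (S : nat -> set 'rV[R]_n) (T : 'rV[R]_n -> R -> 'rV[R]_n) (eps : nat -> R).

Lemma Sext_nonincreasing : (forall i, (i < m)%N -> S i.+1 `<=` S i) ->
  forall i j, (i <= j)%N -> Sext m S j `<=` Sext m S i.
Proof.
move=> S_sub; apply: (homo_leq (r := fun A B => B `<=` A)) => [A|A B C|i].
- exact: subset_refl.
- by move=> BA CB; apply: subset_trans CB BA.
- rewrite /Sext; case: ltnP => [i_lt_m|_]; last exact: sub0set.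
  by rewrite ltnW //; exact: S_sub.
Qed.

Variables (delta : \bar R) (kappa : R).
Hypothesis data : truncation_data psi m S delta kappa T.

Lemma Gamma_lt_level_lt x i a :
  Sext m S i x -> (Gamma psi x < a%:E)%E -> (a%:E <= delta)%E -> (i < m)%N.
Proof.
case: data => _ _ _ Gamma_Sm _; rewrite /Sext ltn_neqAle.
case: (ltngtP i m) => //= -> Smx Gamma_lt a_le_delta.
by have := lt_le_trans (le_lt_trans (Gamma_Sm _ Smx) Gamma_lt) a_le_delta; rewrite ltxx.
Qed.

Hypothesis eps_gt0 : forall s, 0 < eps s.
Hypothesis eps_le_delta : forall s, ((eps s)%:E <= delta)%E.

Lemma trunc_step_Sext st st' j :
  trunc_step psi m S T eps st st' -> Sext m S j st.1 -> Sext m S j.+1 st'.1.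
Proof.
case: data => [[_ S_sub] _ _ _ T_spec] [i [i_le_m Si_x notSi1_x Gamma_lt [-> _]]] Sj_x.
have i_lt_m := Gamma_lt_level_lt Si_x Gamma_lt (eps_le_delta _).
have Sext_sub := Sext_nonincreasing S_sub.
have j_le_i : (j <= i)%N.
  by rewrite leqNgt; apply/negP => j_gt_i; apply/notSi1_x/(Sext_sub _ _ j_gt_i).
move: Si_x notSi1_x; rewrite /Sext i_le_m i_lt_m => Si_x notSi1_x.
have [_ /(_ Gamma_lt) [Si1_Tx _ _]] :=
  T_spec (eps (st.2 i)) _ _ i_lt_m (eps_gt0 _) (eps_le_delta _) Si_x notSi1_x.
by apply: (Sext_sub j.+1 i.+1) => //; rewrite /Sext i_lt_m.
Qed.

End Truncation.

Theorem lemma3p1 (R : realType) (n : nat)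
    (f phi : 'rV[R]_n -> R)
    (hf : C1_fun f) (hphi : convex_fun phi)
    (m : nat) (S : nat -> set 'rV[R]_n) (delta : \bar R) (kappa : R)
    (T : 'rV[R]_n -> R -> 'rV[R]_n)
    (hdata : truncation_data (fun x => f x + phi x) m S delta kappa T)
    (eps : nat -> R)
    (heps_pos : forall s, 0 < eps s)
    (heps_dec : forall s, eps s.+1 < eps s)
    (heps_le : forall s, ((eps s)%:E <= delta)%E)
    (x0 : 'rV[R]_n) (c0 : nat -> nat)
    (k : nat) (run : nat -> 'rV[R]_n * (nat -> nat)) :
  run 0%N = (x0, c0) ->
  (forall j, (j < k)%N -> trunc_step (fun x => f x + phi x) m S T eps (run j) (run j.+1)) ->
  (k <= m)%N.
Proof.
move=> _ steps.
have run_Sext j : (j <= k)%N -> Sext m S j (run j).1.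
  elim: j => [_|j IH j_lt_k]; first by case: hdata => [[S0 _] _ _ _ _]; rewrite /Sext S0.
  exact: (trunc_step_Sext hdata heps_pos heps_le (steps j j_lt_k) (IH (ltnW j_lt_k))).
by move: (run_Sext k (leqnn k)); rewrite /Sext; case: ifP.
Qed.
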